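(* Let $p$ be an odd prime and $t$ a positive integer, and let $n$ be a positive integer dividing $p^t+1$ such that $\frac{p^t+1}{n}$ is odd. Let $\eta$ be a root of an irreducible quadratic polynomial over $\mathbb{F}_p$. Let $S\subseteq\mathbb{F}_p^n\times\mathbb{F}_p^n$ be a totally isotropic, simultaneously negacyclic subspace whose image under $(\mathbf{a},\mathbf{b})\mapsto\mathbf{a}+\eta\mathbf{b}$ is an ideal of $\mathbb{F}_p(\eta)[X]/\langle X^n+1\rangle$. Let $g(X)$ be the monic generator (dividing $X^n+1$) of the ideal $F=\{\mathbf{a}:(\mathbf{a},\mathbf{b})\in S\}$ of $\mathcal{R}=\mathbb{F}_p[X]/\langle X^n+1\rangle$. If $g(-X)=g(X)$, then $S$ is uniquely negacyclic.
   Context: Vectors $(a_0,\dots,a_{n-1})$ over a field are identified with polynomials $\sum a_iX^i$ modulo $X^n+1$. $N:\mathbb{F}_p^n\to\mathbb{F}_p^n$ is $(u_0,\dots,u_{n-1})\mapsto(-u_{n-1},u_0,\dots,u_{n-2})$; $S$ is simultaneously negacyclic if $(\mathbf{a},\mathbf{b})\in S$ implies $(N\mathbf{a},N\mathbf{b})\in S$. The symplectic inner product is $\langle(\mathbf{a},\mathbf{b}),(\mathbf{c},\mathbf{d})\rangle_s=\mathbf{a}^T\mathbf{d}-\mathbf{b}^T\mathbf{c}$ and $S$ is totally isotropic if it vanishes on $S\times S$. $S$ is uniquely negacyclic if there is a unique $f\in\mathcal{R}$ with $(g,f)\in S$. *)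

From HB Require Import structures.
From mathcomp Require Import all_boot all_order all_algebra all_field.
Set Implicit Arguments. Unset Strict Implicit. Unset Printing Implicit Defensive.
Import Order.TTheory GRing.Theory Num.Theory.
Local Open Scope ring_scope.

Section Negacyclic.
Variable R : fieldType.
Variable n : nat.

Definition vget (v : 'rV[R]_n) (k : nat) : R :=
  if insub k is Some i then v 0 i else 0.

Definition vpoly (v : 'rV[R]_n) : {poly R} := \poly_(i < n) vget v i.

Definition pvec (f : {poly R}) : 'rV[R]_n :=
  \row_(i < n) (f %% ('X^n + 1))`_i.

Definition negashift (v : 'rV[R]_n) : 'rV[R]_n :=
  \row_(i < n) (if (i : nat) == 0%N then - vget v n.-1 else vget v i.-1).

Definition is_subspace (S : 'rV[R]_n * 'rV[R]_n -> Prop) : Prop :=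
  [/\ S (0, 0),
      (forall u v, S u -> S v -> S (u.1 + v.1, u.2 + v.2)) &
      (forall (c : R) u, S u -> S (c *: u.1, c *: u.2))].

Definition simult_negacyclic (S : 'rV[R]_n * 'rV[R]_n -> Prop) : Prop :=
  forall a b, S (a, b) -> S (negashift a, negashift b).

Definition dotv (u v : 'rV[R]_n) : R := \sum_(i < n) u 0 i * v 0 i.

Definition symp (x y : 'rV[R]_n * 'rV[R]_n) : R :=
  dotv x.1 y.2 - dotv x.2 y.1.

Definition totally_isotropic (S : 'rV[R]_n * 'rV[R]_n -> Prop) : Prop :=
  forall x y, S x -> S y -> symp x y = 0.

(* I is an ideal of K[X]/<X^n+1> (vectors identified with polynomials),
   where K is the subfield of R described by the predicate C of admissible
   multiplier polynomials *)
Definition is_nc_ideal (C : {poly R} -> Prop) (I : 'rV[R]_n -> Prop) : Prop :=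
  [/\ I 0,
      (forall u v, I u -> I v -> I (u + v)) &
      (forall h v, C h -> I v -> I (pvec (h * vpoly v)))].

Definition uniquely_negacyclic (S : 'rV[R]_n * 'rV[R]_n -> Prop)
  (g : {poly R}) : Prop :=
  exists! f : 'rV[R]_n, S (pvec g, f).

End Negacyclic.

From HB Require Import structures.
From mathcomp Require Import all_boot all_order all_algebra all_field ring zify.
Import GRing.Theory.
Set Implicit Arguments. Unset Strict Implicit.
Local Open Scope ring_scope.

(* Let (0, d) be in S and D the polynomial of d. Multiplying the image eta d of (0, d)
   by eta inside the ideal and reducing eta^2 with the minimal polynomial of eta shows
   that d is a first component, so
   D = h g modulo X^n + 1. Isotropy against the shifts (X^k g, _) says g annihilates the
   reversal of D, which equals X^(n-1) D(-X)^(p^t) modulo X^n + 1 because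
   p^t = n - 1 (mod 2n) and Frobenius. As g is even, D(-X) = h(-X) g, so D(-X)^(p^t+1)
   vanishes modulo X^n + 1, which is squarefree since p does not divide n; hence D = 0.
   Uniqueness follows: two partners f, f' of g give (0, f - f') in S. *)

Section PolyDivisibility.
Variable K : fieldType.
Implicit Types f w a b x u : {poly K}.

Lemma dvdp_modpB w f : w %| f %% w - f.
Proof.
by rewrite {2}(divp_eq f w) opprD addrCA subrr addr0 -mulNr dvdp_mull.
Qed.

Lemma dvdp_comp_polyB w f a b : w %| a - b -> w %| (f \Po a) - (f \Po b).
Proof.
move=> hab; rewrite (comp_polyE f a) (comp_polyE f b) -sumrB.
apply: (big_ind (fun x => w %| x)) => // [x y|i _]; first exact: dvdp_add.
by rewrite -scalerBr -mul_polyC dvdp_mull // subrXX dvdp_mulr.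
Qed.

(* A squarefree [u] splits as [e * gcd(u, x)] with [e] coprime to [x]. *)
Lemma separable_dvdp_exp u x k : separable_poly u -> u %| x ^+ k.+1 -> u %| x.
Proof.
move=> hs hux; set g := gcdp u x; set e := u %/ g.
have ueg : e * g = u by rewrite divpK // dvdp_gcdl.
have ce_g : coprimep e g by apply: (separable_coprime hs); rewrite ueg.
have ce_x : coprimep e x.
  apply/coprimepP => c ce cx; apply: (coprimepP _ _ ce_g c ce).
  by rewrite dvdp_gcd cx (dvdp_trans ce) // -ueg dvdp_mulr.
have e1 : e %= 1.
  apply: (coprimepP _ _ (coprimep_expr k.+1 ce_x) e (dvdpp e)).
  by rewrite (dvdp_trans _ hux) // -ueg dvdp_mulr.
by rewrite -ueg (eqp_dvdl _ (eqp_mulr g e1)) mul1r dvdp_gcdr.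
Qed.

Lemma comp_poly_negXK f : (f \Po (- 'X)) \Po (- 'X) = f.
Proof. by rewrite -comp_polyA raddfN /= comp_polyX opprK comp_polyXr. Qed.

End PolyDivisibility.

Section NegacyclicPolynomials.
Variables (K : fieldType) (n : nat).
Hypothesis n_gt0 : (0 < n)%N.
Local Notation u := ('X^n + 1 : {poly K}).
Implicit Types (f w : {poly K}) (v d : 'rV[K]_n).

Lemma size_XnD1 : size u = n.+1.
Proof. by rewrite -polyC1 size_XnaddC. Qed.

Lemma XnD1_neq0 : u != 0.
Proof. by rewrite -size_poly_eq0 size_XnD1. Qed.

Lemma size_modXnD1 f : (size (f %% u)%R <= n)%N.
Proof. by rewrite -ltnS -size_XnD1 ltn_modp XnD1_neq0. Qed.

Lemma vgetE v (i : 'I_n) : vget v i = v 0 i.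
Proof.
by rewrite /vget; case: insubP => [j _ /val_inj -> //|]; rewrite ltn_ord.
Qed.

Lemma vpoly_pvec f : vpoly (pvec n f) = f %% u.
Proof.
apply/polyP => i; rewrite coef_poly; case: ltnP => hi.
  by rewrite (vgetE _ (Ordinal hi)) mxE.
by rewrite nth_default // (leq_trans (size_modXnD1 f)).
Qed.

Lemma pvec_vpoly v : pvec n (vpoly v) = v.
Proof.
apply/rowP => i; rewrite mxE modp_small; last by rewrite size_XnD1 ltnS size_poly.
by rewrite coef_poly ltn_ord vgetE.
Qed.

Lemma vpolyZ c v : vpoly (c *: v) = c *: vpoly v.
Proof.
apply/polyP => i; rewrite coefZ !coef_poly; case: ltnP => hi; last by rewrite mulr0.
by rewrite !(vgetE _ (Ordinal hi)) mxE.
Qed.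

Lemma pvecZ c f : pvec n (c *: f) = c *: pvec n f.
Proof. by apply/rowP => i; rewrite !mxE modpZl coefZ. Qed.

Lemma vpoly_eq0 v : (vpoly v == 0) = (v == 0).
Proof.
apply/eqP/eqP => [v0|->].
  by rewrite -[v]pvec_vpoly v0; apply/rowP => i; rewrite !mxE mod0p coef0.
apply/polyP => i; rewrite coef_poly coef0; case: ltnP => // hi.
by rewrite (vgetE _ (Ordinal hi)) mxE.
Qed.

Lemma dvdp_XnD1_vpoly v : (u %| vpoly v) = (v == 0).
Proof.
by rewrite -vpoly_eq0; apply/modp_eq0P/eqP; rewrite modp_small // size_XnD1 ltnS size_poly.
Qed.

Lemma coef_modXnD1 f j : (size f <= n + n)%N -> (j < n)%N ->
  (f %% u)`_j = f`_j - f`_(j + n).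
Proof.
move=> hf hj.
have split_f : f = drop_poly n f * u + (take_poly n f - drop_poly n f).
  by rewrite -{1}(poly_take_drop n f); ring.
rewrite {1}split_f modp_addl_mul_small; last first.
  rewrite size_XnD1 ltnS (leq_trans (size_polyD _ _)) // geq_max size_take_poly.
  by rewrite size_polyN size_drop_poly leq_subLR.
by rewrite coefB coef_take_poly hj coef_drop_poly.
Qed.

Lemma dvdp_XnD1_coef w :
  (forall k, (k < n)%N -> (('X^k * w) %% u)`_n.-1 = 0) -> u %| w.
Proof.
move=> h; apply/modp_eq0P/polyP => j; rewrite coef0.
case: (ltnP j n) => hj; last by rewrite nth_default // (leq_trans (size_modXnD1 w)).
have hk : (n.-1 - j < n)%N by lia.
have := h _ hk; rewrite -modp_mul coef_modXnD1; first last.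
- by rewrite prednK.
- rewrite (leq_trans (size_polyMleq _ _)) // size_polyXn.
  by rewrite (leq_trans _ (leq_add hk (size_modXnD1 w))).
rewrite !coefXnM ifF; last by apply/negbTE; rewrite -leqNgt leq_subr.
rewrite ifF; last by apply/negbTE; rewrite -leqNgt; lia.
rewrite [_`_(n.-1 + n - _)]nth_default; last by rewrite (leq_trans (size_modXnD1 w)) //; lia.
by rewrite subr0 (_ : n.-1 - (n.-1 - j) = j)%N //; lia.
Qed.

Definition rev_vpoly d : {poly K} := \sum_(i < n) vget d i *: 'X^(n.-1 - i).

Lemma coef_rev_vpoly d (j : 'I_n) : (rev_vpoly d)`_(n.-1 - j) = vget d j.
Proof.
rewrite /rev_vpoly coef_sumMXn (big_pred1 j) // => i /=.
by apply/eqP/eqP => [h|->] //; apply: val_inj => /=; move: (ltn_ord i) (ltn_ord j) h; lia.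
Qed.

Lemma size_rev_vpoly d : (size (rev_vpoly d) <= n)%N.
Proof.
rewrite /rev_vpoly; apply: (big_ind (fun x : {poly K} => size x <= n)%N).
- by rewrite size_poly0.
- by move=> x y hx hy; rewrite (leq_trans (size_polyD _ _)) // geq_max hx hy.
by move=> i _; rewrite (leq_trans (size_scale_leq _ _)) // size_polyXn; lia.
Qed.

Lemma dotv_pvec f d : dotv (pvec n f) d = ((f * rev_vpoly d) %% u)`_n.-1.
Proof.
rewrite mulrC -modp_mul mulrC; set P := (f %% u) * rev_vpoly d.
have hP : (size P <= n.-1 + n)%N.
  rewrite (leq_trans (size_polyMleq _ _)) //.
  by move: (size_modXnD1 f) (size_rev_vpoly d); set a := size _; set b := size _; lia.
rewrite coef_modXnD1 ?prednK // ?(leq_trans hP) ?leq_add2r ?leq_pred //.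
rewrite [P`_(n.-1 + n)]nth_default // subr0 coefM.
rewrite -(big_mkord xpredT (fun j => (f %% u)`_j * (rev_vpoly d)`_(n.-1 - j))).
rewrite prednK // big_mkord; apply: eq_bigr => j _.
by rewrite coef_rev_vpoly vgetE mxE.
Qed.

(* [X^(n-1) (-X^(n-1))^i = X^(n-1-i) (-X^n)^i] and [-X^n = 1] modulo [X^n + 1]. *)
Lemma rev_vpoly_congr d :
  u %| rev_vpoly d - 'X^(n.-1) * (vpoly d \Po (- 'X^(n.-1))).
Proof.
rewrite /rev_vpoly /vpoly poly_def raddf_sum mulr_sumr -sumrB.
apply: (big_ind (fun x => u %| x)) => // [x y|i _ /=]; first exact: dvdp_add.
rewrite comp_polyZ rmorphXn /= comp_polyX -scalerAr -scalerBr -mul_polyC dvdp_mull //.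
have hi : (i <= n.-1)%N by rewrite -ltnS prednK.
have -> : 'X^(n.-1) * (- 'X^(n.-1)) ^+ i = 'X^(n.-1 - i) * (- 'X^n) ^+ i :> {poly K}.
  by rewrite -{1}(subnK hi) exprD -mulrA -exprMn mulrN -exprS prednK.
rewrite -{1}(mulr1 'X^(n.-1 - i)) -mulrBr dvdp_mull // -opprB dvdpNr.
by rewrite -[X in _ - X](expr1n _ i) subrXX -opprD dvdp_mulr // dvdpNr.
Qed.

Lemma XnD1_dvd_XpredB j : u %| 'X^(n.-1) - 'X^(n.-1 + n * (2 * j)).
Proof.
rewrite exprD -{1}(mulr1 'X^(n.-1)) -mulrBr dvdp_mull // mulnA !exprM -opprB dvdpNr.
by rewrite -[X in _ - X](expr1n _ j) subrXX subr_sqr_1 dvdp_mulr // dvdp_mull.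
Qed.

Lemma coprimep_XnD1_X k : coprimep u 'X^k.
Proof.
rewrite coprimep_expr // coprimepX rootE !hornerE expr0n.
by rewrite eqn0Ngt n_gt0 add0r oner_eq0.
Qed.

Lemma separable_XnD1 : n%:R != 0 :> K -> separable_poly u.
Proof.
move=> hn0; rewrite unlock.
have -> : u^`() = n%:R *: 'X^(n.-1).
  by rewrite derivD derivXn -polyC1 derivC addr0 scaler_nat.
by rewrite coprimepZr // coprimep_XnD1_X.
Qed.

Lemma dvdp_XnD1_negX f : ~~ odd n -> u %| f -> u %| f \Po (- 'X).
Proof.
move=> n_even /dvdpP [k ->]; rewrite comp_polyM dvdp_mull //.
rewrite comp_polyD -polyC1 comp_polyC rmorphXn /= comp_polyX exprNn.
by rewrite -signr_odd (negbTE n_even) expr0 mul1r.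
Qed.

Section Isotropy.
Variables (S : 'rV[K]_n * 'rV[K]_n -> Prop) (g : {poly K}).
Hypothesis S_iso : totally_isotropic S.
Hypothesis S_gen : forall k, exists b, S (pvec n ('X^k * g), b).

Lemma isotropic_dvdp_rev d : S (0, d) -> u %| g * rev_vpoly d.
Proof.
move=> hd; apply: dvdp_XnD1_coef => k _; rewrite mulrA -dotv_pvec.
have [b hb] := S_gen k; have := S_iso hb hd; rewrite /symp /=.
by rewrite [dotv b 0]big1 ?subr0 // => i _; rewrite mxE mulr0.
Qed.

End Isotropy.

End NegacyclicPolynomials.

Lemma irreducible_poly_noroot (F : fieldType) (q : {poly F}) (c : F) :
  (2 < size q)%N -> irreducible_poly q -> ~~ root q c.
Proof.
move=> q_gt2 q_irr; apply/negP => qc.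
have := q_irr.2 ('X - c%:P); rewrite size_XsubC dvdp_XsubCl => /(_ isT qc).
by move/eqp_size; rewrite size_XsubC => q2; rewrite -q2 in q_gt2.
Qed.

Section QuadraticExtension.
Variables (F : fieldType) (L : fieldExtType F) (eta : L) (q : {poly F}).
Hypotheses (q_size : size q = 3%N) (q_irr : irreducible_poly q).
Hypothesis q_eta : root (map_poly (in_alg L) q) eta.
Local Notation iota := (in_alg L).

Let q_noroot c : ~~ root q c.
Proof. by apply: irreducible_poly_noroot; rewrite ?q_size. Qed.

Lemma in_alg_eta_indep x y : iota x + eta * iota y = 0 -> x = 0 /\ y = 0.
Proof.
move=> xy0.
have y0 : y = 0.
  apply/eqP; apply: contraT => y_neq0.
  have eta_Fp : eta = iota (- x / y).
    rewrite fmorph_div rmorphN /= -[eta](mulfK (_ : iota y != 0)) ?fmorph_eq0 //.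
    by congr (_ / _); apply/eqP; rewrite -addr_eq0 addrC xy0.
  have := q_noroot (- x / y).
  by move: q_eta; rewrite eta_Fp fmorph_root => ->.
by move: xy0; rewrite y0 rmorph0 mulr0 addr0 => /eqP; rewrite fmorph_eq0 => /eqP.
Qed.

Lemma coef0_irreducible_neq0 : q`_0 != 0.
Proof. by have := q_noroot 0; rewrite rootE horner_coef0. Qed.

Lemma eta_sqr_coord x y z :
  eta ^+ 2 * iota z = iota x + eta * iota y -> z = - (q`_2 / q`_0) * x.
Proof.
move=> E.
have q_eta0 : iota q`_0 + iota q`_1 * eta + iota q`_2 * eta ^+ 2 = 0.
  move: q_eta; rewrite /root horner_coef size_map_poly q_size.
  by rewrite !big_ord_recr big_ord0 /= !coef_map /= add0r expr0 mulr1 expr1 => /eqP.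
have xz0 : iota (q`_2 * x + q`_0 * z) + eta * iota (q`_2 * y + q`_1 * z) = 0.
  rewrite !rmorphD !rmorphM.
  transitivity (iota q`_2 * (iota x + eta * iota y - eta ^+ 2 * iota z)
                + iota z * (iota q`_0 + iota q`_1 * eta + iota q`_2 * eta ^+ 2)); first by ring.
  by rewrite -E subrr q_eta0 !mulr0 addr0.
move: (in_alg_eta_indep xz0).1 => /eqP; rewrite addrC addr_eq0 => /eqP zx.
have q0_neq0 := coef0_irreducible_neq0.
by apply: (mulfI q0_neq0); rewrite zx; field.
Qed.

Variables (n : nat) (S : 'rV[F]_n * 'rV[F]_n -> Prop).
Hypotheses (n_gt0 : (0 < n)%N) (S_sub : is_subspace S).
Hypothesis S_ideal : is_nc_ideal
  (fun h : {poly L} => forall i, h`_i \in <<1%VS; eta>>%VS)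
  (fun v : 'rV[L]_n => exists a b, S (a, b) /\
     v = map_mx (in_alg L) a + eta *: map_mx (in_alg L) b).

Lemma mem_first_of_mem_second d : S (0, d) -> exists b, S (d, b).
Proof.
move=> hd; have [_ _ S_mul] := S_ideal; have [_ _ S_scale] := S_sub.
have eta_adm i : (eta%:P)`_i \in <<1%VS; eta>>%VS.
  by rewrite coefC; case: (i == 0)%N; [exact: memv_adjoin | exact: mem0v].
have [|a [b [hab E]]] := S_mul _ (eta *: map_mx (in_alg L) d) eta_adm.
  by exists 0, d; rewrite map_mx0 add0r.
exists ((- (q`_2 / q`_0)) *: b).
suff -> : d = (- (q`_2 / q`_0)) *: a by exact: (S_scale _ (a, b)).
apply/rowP => i; rewrite mxE; apply: (eta_sqr_coord (y := b 0 i)).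
have := congr1 (fun M : 'M[L]_(1, n) => M 0 i) E.
by rewrite /= vpolyZ // mul_polyC scalerA pvecZ pvec_vpoly // -expr2 !mxE.
Qed.

End QuadraticExtension.

Section PrimeField.
Variable p : nat.
Hypothesis p_pr : prime p.

Lemma Fp_expr_pexpn t (c : 'F_p) : c ^+ (p ^ t)%N = c.
Proof.
elim: t => [|t IH]; first by rewrite expn0 expr1.
by rewrite expnSr exprM IH; have := expf_card c; rewrite card_Fp.
Qed.

Lemma Fp_poly_frobenius t (f : {poly 'F_p}) : f ^+ (p ^ t)%N = f \Po 'X^(p ^ t)%N.
Proof.
have p_char : p \in [pchar {poly 'F_p}] by rewrite pchar_poly pchar_Fp.
have pt_char : [pchar {poly 'F_p}].-nat (p ^ t)%N.
  by rewrite (eq_pnat _ (pcharf_eq p_char)) pnatX pnat_id.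
elim/poly_ind: f => [|f c IH].
  by rewrite comp_poly0 expr0n expn_eq0 eqn0Ngt prime_gt0.
rewrite exprDn_pchar // exprMn IH -rmorphXn Fp_expr_pexpn.
by rewrite comp_polyD comp_polyM comp_polyX comp_polyC.
Qed.

Section NegacyclicDual.
Variables (n t j : nat).
Hypotheses (n_gt0 : (0 < n)%N) (n_even : ~~ odd n) (n_neq0 : n%:R != 0 :> 'F_p).
Hypothesis pt_eq : (p ^ t = n.-1 + n * (2 * j))%N.
Local Notation u := ('X^n + 1 : {poly 'F_p}).
Implicit Types d : 'rV['F_p]_n.

Lemma rev_vpoly_frobenius_congr d :
  u %| rev_vpoly d - 'X^(n.-1) * (vpoly d \Po (- 'X)) ^+ (p ^ t)%N.
Proof.
set Dt := vpoly d \Po (- 'X).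
have -> : rev_vpoly d - 'X^(n.-1) * Dt ^+ (p ^ t)%N =
    (rev_vpoly d - 'X^(n.-1) * (vpoly d \Po (- 'X^(n.-1))))
    + 'X^(n.-1) * ((Dt \Po 'X^(n.-1)) - (Dt \Po 'X^(p ^ t)%N)).
  have DtE m : Dt \Po 'X^m = vpoly d \Po (- 'X^m).
    by rewrite -comp_polyA raddfN /= comp_polyX.
  by rewrite Fp_poly_frobenius !DtE; ring.
rewrite dvdp_add ?rev_vpoly_congr // dvdp_mull // dvdp_comp_polyB // pt_eq.
exact: XnD1_dvd_XpredB.
Qed.

Lemma negacyclic_dual_eq0 (g h : {poly 'F_p}) d : g \Po (- 'X) = g ->
  u %| g * rev_vpoly d -> vpoly d = (h * g) %% u -> d = 0.
Proof.
move=> g_even u_dvd_grev dh; set Dt := vpoly d \Po (- 'X).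
have u_dvd_gDt : u %| g * Dt ^+ (p ^ t)%N.
  rewrite -(Gauss_dvdpr _ (coprimep_XnD1_X _ n_gt0 n.-1)).
  have -> : 'X^(n.-1) * (g * Dt ^+ (p ^ t)%N) =
      g * rev_vpoly d - g * (rev_vpoly d - 'X^(n.-1) * Dt ^+ (p ^ t)%N) by ring.
  by rewrite dvdp_sub // dvdp_mull // rev_vpoly_frobenius_congr.
have u_dvd_Dt_hg : u %| Dt - (h \Po (- 'X)) * g.
  rewrite -[X in _ * X]g_even -comp_polyM -raddfB dvdp_XnD1_negX // dh.
  exact: dvdp_modpB.
have u_dvd_Dt : u %| Dt.
  apply: (separable_dvdp_exp (k := p ^ t)) => //; first exact: separable_XnD1.
  have -> : Dt ^+ (p ^ t)%N.+1 =
      (Dt - (h \Po (- 'X)) * g) * Dt ^+ (p ^ t)%N + (h \Po (- 'X)) * (g * Dt ^+ (p ^ t)%N).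
    by rewrite exprS; ring.
  by apply: dvdp_add; [apply: dvdp_mulr | apply: dvdp_mull].
apply/eqP; rewrite -(dvdp_XnD1_vpoly n_gt0) -[vpoly d]comp_poly_negXK.
exact: dvdp_XnD1_negX.
Qed.
End NegacyclicDual.

End PrimeField.

Lemma odd_cofactor_decomp n m : (n %| m + 1)%N -> odd ((m + 1) %/ n) ->
  exists j, m = (n.-1 + n * (2 * j))%N.
Proof.
move=> /divnK def_m odd_k; exists ((m + 1) %/ n)./2.
move: def_m (odd_double_half ((m + 1) %/ n)); rewrite odd_k -muln2.
move: ((m + 1) %/ n)%N => k; move: k./2 => j; nia.
Qed.

Lemma odd_cofactor_even n m : odd m -> (n %| m + 1)%N -> odd ((m + 1) %/ n) ->
  ~~ odd n.
Proof.
move=> odd_m /divnK def_m odd_k; apply: contraL odd_m => odd_n.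
by rewrite -oddS -addn1 -def_m oddM odd_k odd_n.
Qed.

Lemma Fp_natr_neq0 p t n : prime p -> (0 < t)%N -> (n %| p ^ t + 1)%N ->
  n%:R != 0 :> 'F_p.
Proof.
move=> p_pr t_gt0 n_dvd; rewrite -(dvdn_pcharf (pchar_Fp p_pr)).
apply: contraL (prime_gt1 p_pr) => /dvdn_trans/(_ n_dvd).
by rewrite dvdn_addr ?dvdn_exp // dvdn1 => /eqP ->.
Qed.

Theorem mainTheorem7
  (p t n : nat) (hp : prime p) (hpodd : odd p) (ht : (0 < t)%N)
  (hn : (0 < n)%N) (hdvd : (n %| p ^ t + 1)%N) (hq : odd ((p ^ t + 1) %/ n))
  (L : fieldExtType 'F_p) (eta : L) (q : {poly 'F_p})
  (hqsz : size q = 3%N) (hqirr : irreducible_poly q)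
  (heta : root (map_poly (in_alg L) q) eta)
  (S : 'rV['F_p]_n * 'rV['F_p]_n -> Prop)
  (hSsub : is_subspace S) (hSiso : totally_isotropic S)
  (hSneg : simult_negacyclic S)
  (hSideal : is_nc_ideal
     (fun h : {poly L} => forall i, h`_i \in <<1%VS; eta>>%VS)
     (fun v : 'rV[L]_n => exists a b, S (a, b) /\
        v = map_mx (in_alg L) a + eta *: map_mx (in_alg L) b))
  (g : {poly 'F_p}) (hgmon : g \is monic) (hgdvd : g %| 'X^n + 1)
  (hgen : forall a : 'rV['F_p]_n,
     (exists b, S (a, b)) <-> exists h : {poly 'F_p}, vpoly a = (h * g) %% ('X^n + 1))
  (hgeven : g \Po (- 'X) = g) :
  uniquely_negacyclic S g.
Proof.
have [j pt_eq] := odd_cofactor_decomp hdvd hq.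
have n_even : ~~ odd n by apply: odd_cofactor_even hdvd hq; rewrite oddX hpodd orbT.
have n_neq0 := Fp_natr_neq0 hp ht hdvd.
have S_gen k : exists b, S (pvec n ('X^k * g), b).
  by apply/hgen; exists 'X^k; rewrite vpoly_pvec.
have dual_eq0 d : S (0, d) -> d = 0.
  move=> hd; have [b hb] := mem_first_of_mem_second hqsz hqirr heta hn hSsub hSideal hd.
  have [h dh] := (hgen d).1 (ex_intro _ b hb).
  apply: (negacyclic_dual_eq0 hp hn n_even n_neq0 pt_eq hgeven _ dh).
  exact: (isotropic_dvdp_rev hn hSiso S_gen hd).
have [_ S_add S_scale] := hSsub.
have [b hb] : exists b, S (pvec n g, b) by apply/hgen; exists 1; rewrite vpoly_pvec // mul1r.
exists b; split => // f hf; apply/eqP; rewrite -subr_eq0; apply/eqP/dual_eq0.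
by have := S_add _ _ hb (S_scale (-1) _ hf); rewrite /= !scaleN1r subrr.
Qed.
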